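(* Let $T$ be a set (of traits) with a binary relation $\preceq$ on $T$, and for every link $k$ and every $t\in T$ let $t\oplus k\subseteq T$ be a set of traits. Assume that for all $t_i,t_j\in T$ and every link $k$: if $t_i\preceq t_j$ then for every $t\in t_j\oplus k$ there exists $t'\in t_i\oplus k$ with $t'\preceq t$. Fix a link $k$, and for a label $l=(t_a,t_b)\in T\times T$ let $l\oplus e=\{(t,t_b): t\in t_a\oplus k\}$ (appending $k$ to the first route, after which both routes end at the same node). Let $l_i=(t_{i,a},t_{i,b})$ and $l_j=(t_{j,a},t_{j,b})$ be labels. If $l_i\preceq_{\ne} l_j$, then for every $l\in l_j\oplus e$ there exists $l'\in l_i\oplus e$ with $l'\preceq_{=} l$.
   Context: Setting: a network with nodes and links; a route is a sequence of neighboring links, and a trait records the information (cost, resources) needed to set up a connection along a route; $t\oplus k$ is the set of traits derived by appending link $k$ to a route with trait $t$; $\preceq$ means ''better than or equal to''. A label is a pair $(t_a,t_b)$ of traits of two link-disjoint routes. For labels $l_i=(t_{i,a},t_{i,b})$, $l_j=(t_{j,a},t_{j,b})$ (routes ending at different nodes) define $l_i\preceq_{\ne} l_j$ iff $t_{i,a}\preceq t_{j,a}$ and $t_{i,b}\preceq t_{j,b}$. For labels $l_i=(t_i,t'_i)$, $l_j=(t_j,t'_j)$ whose both routes end at the same node, define the normal comparison $l_i\preceq_n l_j$ iff $t_i\preceq t_j$ and $t'_i\preceq t'_j$; the cross comparison $l_i\preceq_x l_j$ iff $t_i\preceq t'_j$ and $t'_i\preceq t_j$; and $l_i\preceq_=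 l_j$ iff $l_i\preceq_n l_j$ or $l_i\preceq_x l_j$. *)

(* A label is a pair of traits of two link-disjoint routes. *)
Definition label (T : Type) : Type := (T * T)%type.

(* l_i <=_{ne} l_j : componentwise comparison (routes ending at different nodes) *)
Definition le_ne {T : Type} (le : T -> T -> Prop) (li lj : label T) : Prop :=
  le (fst li) (fst lj) /\ le (snd li) (snd lj).

(* normal comparison (both routes end at the same node) *)
Definition le_n {T : Type} (le : T -> T -> Prop) (li lj : label T) : Prop :=
  le (fst li) (fst lj) /\ le (snd li) (snd lj).

Definition le_x {T : Type} (le : T -> T -> Prop) (li lj : label T) : Prop :=
  le (fst li) (snd lj) /\ le (snd li) (fst lj).

Definition le_eq {T : Type} (le : T -> T -> Prop) (li lj : label T) : Prop :=
  le_n le li lj \/ le_x le li lj.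

Definition label_ext {T Link : Type} (ext : T -> Link -> T -> Prop) (k : Link)
  (l : label T) : label T -> Prop :=
  fun l' => ext (fst l) k (fst l') /\ snd l' = snd l.

Definition ext_monotone {T Link : Type} (le : T -> T -> Prop)
  (ext : T -> Link -> T -> Prop) : Prop :=
  forall (ti tj : T) (k : Link), le ti tj ->
    forall t, ext tj k t -> exists t', ext ti k t' /\ le t' t.


Lemma le_n_le_eq {T : Type} (le : T -> T -> Prop) (li lj : label T) :
  le_n le li lj -> le_eq le li lj.
Proof. now left. Qed.

Lemma label_ext_monotone {T Link : Type} (le : T -> T -> Prop)
  (ext : T -> Link -> T -> Prop) (k : Link) (li lj : label T) :
  ext_monotone le ext -> le_ne le li lj ->
  forall l, label_ext ext k lj l ->
    exists l', label_ext ext k li l' /\ le_n le l' l.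
Proof.
  destruct li as [ia ib], lj as [ja jb].
  intros Hmono [Hle_a Hle_b] [la lb] [Hext Hb]; simpl in *; subst lb.
  destruct (Hmono ia ja k Hle_a la Hext) as [t [Hext_t Hle_t]].
  now exists (t, ib).
Qed.

Theorem proposition2 (T Link : Type) (le : T -> T -> Prop)
  (ext : T -> Link -> T -> Prop) (* ext t k t' : t' is in t (+) k *)
  (Hmono : ext_monotone le ext) (k : Link) (li lj : label T) :
  le_ne le li lj ->
  forall l, label_ext ext k lj l ->
    exists l', label_ext ext k li l' /\ le_eq le l' l.
Proof.
  intros Hle l Hl.
  destruct (label_ext_monotone le ext k li lj Hmono Hle l Hl) as [l' [Hl' Hle']].
  exists l'; split; [exact Hl' | now apply le_n_le_eq].
Qed.
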